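(* Let $a,b\in\mathbb{R}$ with $a+b>-1$, and let $h_0\in\mathbb{R}$ with $h_0>a+1$ and $h_0>b+1$. Then $$\sum_{\ell=0}^{\infty}(1-2h)\,T_a(h)\,T_b(h)\Big|_{h=h_0+\ell}\;=\;-\frac{(a+h_0)(b+h_0)}{a+b+1}\,T_a(h_0)\,T_b(h_0)\;\equiv\;\mathcal{A}_{a,b}(h_0),$$ the series on the left being convergent.
   Context: For real $a$ and $h$, define $T_a(h)=\frac{1}{\Gamma(-a)^2}\frac{\Gamma(h-a-1)}{\Gamma(h+a+1)}$ (with $1/\Gamma(-a)^2=0$ when $a$ is a nonnegative integer). *)

From Stdlib Require Import Arith Factorial Reals Lra ClassicalEpsilon.
Open Scope R_scope.

(* Gauss/Euler product sequence for the reciprocal Gamma function: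
   1/Gamma(x) = lim_{n->oo} x(x+1)...(x+n) / (n! n^x).  (indexed by m = n-1 >= 0) *)
Definition rgamma_seq (x : R) (m : nat) : R :=
  let n := S m in
  (prod_f_R0 (fun k => x + INR k) n) / (INR (fact n) * Rpower (INR n) x).

(* Reciprocal Gamma function 1/Gamma (entire; vanishes exactly at 0,-1,-2,...),
   defined as the limit of the Gauss sequence (which exists for every real x). *)
Definition rgamma (x : R) : R :=
  epsilon (inhabits 0) (fun l => Un_cv (rgamma_seq x) l).

(* Gamma function on (0, +oo) (used only at positive arguments). *)
Definition Gamma (x : R) : R := / rgamma x.

(* T_a(h) = 1/Gamma(-a)^2 * Gamma(h-a-1)/Gamma(h+a+1);
   1/Gamma(-a)^2 = rgamma(-a)^2 is 0 when a is a nonnegative integer. *)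
Definition T (a h : R) : R :=
  (rgamma (- a)) ^ 2 * (Gamma (h - a - 1) / Gamma (h + a + 1)).

(* For [x > 0] the Gauss product [rgamma_seq x] is decreasing, and its log-ratios are bounded
   below by a telescoping sum, so it stays above [x (x + 1) e^(-x (x + 1))]; hence [rgamma x > 0]
   and [rgamma x = x rgamma (x + 1)]. This gives [(h + a + 1) T_a(h + 1) = (h - a - 1) T_a(h)], which
   makes [A(h) - A(h + 1)] equal to the summand, so the partial sums telescope to
   [A(h0) - A(h0 + n + 1)]. Finally [- A(h0 + n) >= 0] is multiplied at step [n] by a factor at most
   [1 - c / (n + K)], and the divergence of the harmonic series forces it to 0. *)

From Stdlib Require Import Reals.
From Stdlib Require Import Lra Lia ClassicalEpsilon Factorial.
Open Scope R_scope.

Lemma ln_le x y : 0 < x -> x <= y -> ln x <= ln y.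
Proof.
  intros Hx [Hxy | <-]; [left; apply ln_increasing |]; lra.
Qed.

Lemma exp_le x y : x <= y -> exp x <= exp y.
Proof.
  intros [Hxy | <-]; [left; apply exp_increasing |]; lra.
Qed.

Lemma ln_le_sub_1 y : 0 < y -> ln y <= y - 1.
Proof.
  intros Hy. rewrite <- (exp_ln y) at 2 by exact Hy.
  pose proof (exp_ineq1_le (ln y)). lra.
Qed.

Lemma one_sub_inv_le_ln y : 0 < y -> 1 - / y <= ln y.
Proof.
  intros Hy. pose proof (ln_le_sub_1 (/ y) (Rinv_0_lt_compat y Hy)).
  rewrite ln_Rinv in H by exact Hy. lra.
Qed.

Lemma ln_succ_sub_bounds n : 0 < n -> / (n + 1) <= ln (n + 1) - ln n <= / n.
Proof.
  intros Hn.
  assert (Hq : 0 < (n + 1) * / n) by (apply Rmult_lt_0_compat; [lra | apply Rinv_0_lt_compat; lra]).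
  replace (ln (n + 1) - ln n) with (ln ((n + 1) * / n))
    by (rewrite ln_mult, ln_Rinv by (try apply Rinv_0_lt_compat; lra); ring).
  pose proof (ln_le_sub_1 _ Hq). pose proof (one_sub_inv_le_ln _ Hq).
  replace ((n + 1) * / n - 1) with (/ n) in * by (field; lra).
  replace (1 - / ((n + 1) * / n)) with (/ (n + 1)) in * by (field; lra).
  lra.
Qed.

Lemma Un_cv_const c : Un_cv (fun _ => c) c.
Proof.
  intros e He. exists 0%nat. intros n _. unfold Rdist. rewrite Rminus_diag, Rabs_R0. exact He.
Qed.

Lemma Un_cv_ext (u v : nat -> R) l : (forall n, u n = v n) -> Un_cv u l -> Un_cv v l.
Proof.
  intros Euv Hu e He. destruct (Hu e He) as [N HN]. exists N. intros n Hn. rewrite <- Euv. auto.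
Qed.

Lemma Un_cv_ge (u : nat -> R) c l : (forall n, c <= u n) -> Un_cv u l -> c <= l.
Proof.
  intros Hc Hu. exact (Rle_cv_lim Hc (Un_cv_const c) Hu).
Qed.

Lemma Un_cv_succ_div_add c : 0 < c -> Un_cv (fun m => INR (S m) / (INR (S m) + c)) 1.
Proof.
  intros Hc e He. destruct (INR_archimed e c He) as [N HN].
  exists N. intros m Hm. unfold Rdist.
  assert (HmN : INR N <= INR (S m)) by (apply le_INR; lia).
  pose proof (pos_INR (S m)).
  replace (INR (S m) / (INR (S m) + c) - 1) with (- (c / (INR (S m) + c))) by (field; lra).
  rewrite Rabs_Ropp, Rabs_right by (apply Rle_ge, Rlt_le, Rdiv_lt_0_compat; lra).
  apply Rmult_lt_reg_r with (INR (S m) + c); [lra |].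
  unfold Rdiv. rewrite Rmult_assoc, Rinv_l, Rmult_1_r by lra. nra.
Qed.

Section HarmonicDecay.
Variables (u : nat -> R) (c K : R).
Hypothesis c_pos : 0 < c.
Hypothesis K_pos : 0 < K.
Hypothesis u_nonneg : forall n, 0 <= u n.
Hypothesis u_decay : forall n, u (S n) <= (1 - c / (INR n + K)) * u n.

(* Discrete analogue of [u n * (1 + c log ((n + K) / K))] being nonincreasing. *)
Lemma harmonic_decay_invariant n : u n * (1 + c * (ln (INR n + K) - ln K)) <= u 0.
Proof.
  induction n as [| n IHn].
  - simpl. rewrite Rplus_0_l, Rminus_diag, Rmult_0_r, Rplus_0_r, Rmult_1_r. lra.
  - pose proof (pos_INR n) as Hn.
    set (L := c * (ln (INR n + K) - ln K)) in IHn.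
    set (q := c / (INR n + K)).
    assert (HL : 0 <= L).
    { apply Rmult_le_pos; [lra |]. pose proof (ln_le K (INR n + K)). lra. }
    assert (Hq : 0 <= q) by (unfold q; apply Rmult_le_pos; [lra | left; apply Rinv_0_lt_compat; lra]).
    destruct (ln_succ_sub_bounds (INR n + K) ltac:(lra)) as [_ Hstep].
    set (d := c * (ln (INR n + K + 1) - ln (INR n + K))).
    assert (Hd : 0 <= d <= q).
    { unfold d, q. split.
      - apply Rmult_le_pos; [lra |]. pose proof (ln_le (INR n + K) (INR n + K + 1)). lra.
      - unfold Rdiv. apply Rmult_le_compat_l; lra. }
    replace (c * (ln (INR (S n) + K) - ln K)) with (L + d)
      by (unfold L, d; rewrite S_INR; replace (INR n + 1 + K) with (INR n + K + 1) by ring; ring).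
    apply Rle_trans with ((1 - q) * u n * (1 + (L + d))).
    + apply Rmult_le_compat_r; [lra | apply u_decay].
    + apply Rle_trans with (u n * (1 + L)); [| exact IHn].
      assert (Hfactor : (1 - q) * (1 + (L + d)) <= 1 + L) by nra.
      pose proof (u_nonneg n). nra.
Qed.

Lemma harmonic_decay_cv_0 : Un_cv u 0.
Proof.
  intros e He.
  destruct (INR_archimed 1 (exp (ln K + u 0 / (c * e))) ltac:(lra)) as [N HN].
  rewrite Rmult_1_r in HN.
  exists N. intros n Hn. unfold Rdist. rewrite Rminus_0_r, Rabs_right by (apply Rle_ge, u_nonneg).
  assert (HnN : INR N <= INR n) by (apply le_INR; lia).
  assert (Hlog : ln K + u 0 / (c * e) < ln (INR n + K)).
  { rewrite <- (ln_exp (ln K + _)). apply ln_increasing; [apply exp_pos | lra]. }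
  set (L := ln (INR n + K) - ln K) in *.
  assert (HcL : u 0 < e * (c * L)).
  { apply Rmult_lt_reg_l with (/ (c * e)); [apply Rinv_0_lt_compat; nra |].
    replace (/ (c * e) * (e * (c * L))) with L by (field; lra).
    rewrite Rmult_comm. unfold L. lra. }
  pose proof (harmonic_decay_invariant n) as Hinv. fold L in Hinv.
  pose proof (u_nonneg n). pose proof (u_nonneg 0).
  assert (0 < c * L) by nra.
  nra.
Qed.

End HarmonicDecay.

Lemma infinite_sum_telescope (f g : nat -> R) :
  (forall n, f n = g n - g (S n)) -> Un_cv g 0 -> infinite_sum f (g 0%nat).
Proof.
  intros Hfg Hg e He. destruct (Hg e He) as [N HN].
  exists N. intros n Hn.
  assert (Hsum : forall k, sum_f_R0 f k = g 0%nat - g (S k)).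
  { induction k as [| k IHk]; simpl; rewrite Hfg; [| rewrite IHk]; ring. }
  rewrite Hsum. unfold Rdist in *.
  replace (g 0%nat - g (S n) - g 0%nat) with (- (g (S n) - 0)) by ring.
  rewrite Rabs_Ropp. apply HN. lia.
Qed.

Lemma rgamma_seq_0 x : rgamma_seq x 0 = x * (x + 1).
Proof.
  unfold rgamma_seq, Rpower. simpl. rewrite ln_1, Rmult_0_r, exp_0. field.
Qed.

Lemma gauss_log_ratio_bounds x n : 0 < x -> 0 < n ->
  - (x * (x + 1)) * (/ n - / (n + 1))
    <= ln (1 + x / (n + 1)) - x * (ln (n + 1) - ln n) <= 0.
Proof.
  intros Hx Hn.
  assert (Ht : 0 < 1 + x / (n + 1)) by (pose proof (Rdiv_lt_0_compat x (n + 1)); lra).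
  destruct (ln_succ_sub_bounds n Hn) as [Hlo Hhi].
  pose proof (ln_le_sub_1 _ Ht). pose proof (one_sub_inv_le_ln _ Ht).
  split.
  - apply Rle_trans with (x / (n + 1 + x) - x * / n).
    + assert (Hgap : x / (n + 1 + x) - x * / n + x * (x + 1) * (/ n - / (n + 1))
                     = x * x * (x + 1) / (n * (n + 1) * (n + 1 + x))) by (field; lra).
      assert (0 <= x * x * (x + 1) / (n * (n + 1) * (n + 1 + x))).
      { apply Rmult_le_pos; [| left; apply Rinv_0_lt_compat]; nra. }
      lra.
    + replace (1 - / (1 + x / (n + 1))) with (x / (n + 1 + x)) in * by (field; lra).
      pose proof (Rmult_le_compat_l x _ _ (Rlt_le _ _ Hx) Hhi). lra.
  - pose proof (Rmult_le_compat_l x _ _ (Rlt_le _ _ Hx) Hlo).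
    replace (1 + x / (n + 1) - 1) with (x * / (n + 1)) in * by (field; lra). lra.
Qed.

Lemma rgamma_seq_succ x m : 0 < x ->
  rgamma_seq x (S m) = rgamma_seq x m *
    exp (ln (1 + x / (INR (S m) + 1)) - x * (ln (INR (S m) + 1) - ln (INR (S m)))).
Proof.
  intros Hx. pose proof (lt_0_INR (S m) ltac:(lia)) as Hn.
  unfold rgamma_seq, Rpower.
  rewrite (S_INR (S m)), fact_simpl, mult_INR, (S_INR (S m)).
  change (prod_f_R0 (fun k => x + INR k) (S (S m)))
    with (prod_f_R0 (fun k => x + INR k) (S m) * (x + INR (S (S m)))).
  rewrite (S_INR (S m)), Rminus_def, exp_plus, exp_ln, exp_Ropp,
    Rmult_minus_distr_l, Rminus_def, exp_plus, exp_Ropp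
    by (pose proof (Rdiv_lt_0_compat x (INR (S m) + 1)); lra).
  pose proof (INR_fact_lt_0 (S m)). pose proof (exp_pos (x * ln (INR (S m) + 1))).
  pose proof (exp_pos (x * ln (INR (S m)))).
  field. repeat split; lra.
Qed.

Lemma rgamma_seq_lower x m : 0 < x ->
  x * (x + 1) * exp (- (x * (x + 1))) <= rgamma_seq x m.
Proof.
  intros Hx.
  assert (Htel : forall k, x * (x + 1) * exp (- (x * (x + 1)) * (1 - / INR (S k))) <= rgamma_seq x k).
  { induction k as [| k IHk].
    - rewrite rgamma_seq_0. simpl. rewrite Rinv_1, Rminus_diag, Rmult_0_r, exp_0. lra.
    - pose proof (lt_0_INR (S k) ltac:(lia)) as Hn.
      rewrite rgamma_seq_succ, (S_INR (S k)) by exact Hx.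
      destruct (gauss_log_ratio_bounds x (INR (S k)) Hx Hn) as [Hge _].
      pose proof (exp_le _ _ Hge) as Hexp.
      replace (- (x * (x + 1)) * (1 - / (INR (S k) + 1)))
        with (- (x * (x + 1)) * (1 - / INR (S k)) + - (x * (x + 1)) * (/ INR (S k) - / (INR (S k) + 1)))
        by ring.
      rewrite exp_plus, <- Rmult_assoc.
      apply Rmult_le_compat; try (left; apply exp_pos); [| exact IHk | exact Hexp].
      apply Rmult_le_pos; [nra | left; apply exp_pos]. }
  apply Rle_trans with (2 := Htel m).
  apply Rmult_le_compat_l; [nra |]. apply exp_le.
  pose proof (lt_0_INR (S m) ltac:(lia)).
  assert (0 < / INR (S m)) by (apply Rinv_0_lt_compat; lra).
  nra.
Qed.

Lemma rgamma_seq_decreasing x : 0 < x -> Un_decreasing (rgamma_seq x).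
Proof.
  intros Hx m. rewrite rgamma_seq_succ by exact Hx.
  pose proof (lt_0_INR (S m) ltac:(lia)).
  destruct (gauss_log_ratio_bounds x (INR (S m)) Hx ltac:(lra)) as [_ Hle].
  pose proof (exp_le _ _ Hle) as Hexp. rewrite exp_0 in Hexp.
  pose proof (rgamma_seq_lower x m Hx). pose proof (exp_pos (- (x * (x + 1)))).
  assert (0 <= rgamma_seq x m) by nra.
  nra.
Qed.

Lemma rgamma_seq_cv x : 0 < x -> Un_cv (rgamma_seq x) (rgamma x).
Proof.
  intros Hx. unfold rgamma. apply epsilon_spec.
  destruct (decreasing_cv (rgamma_seq x) (rgamma_seq_decreasing x Hx)) as [l Hl].
  - exists 0. intros y [m ->]. unfold opp_seq.
    pose proof (rgamma_seq_lower x m Hx). pose proof (exp_pos (- (x * (x + 1)))). nra.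
  - exists l. exact Hl.
Qed.

Lemma rgamma_pos x : 0 < x -> 0 < rgamma x.
Proof.
  intros Hx. apply Rlt_le_trans with (x * (x + 1) * exp (- (x * (x + 1)))).
  - pose proof (exp_pos (- (x * (x + 1)))). apply Rmult_lt_0_compat; nra.
  - apply Un_cv_ge with (rgamma_seq x); [intros m; now apply rgamma_seq_lower |].
    now apply rgamma_seq_cv.
Qed.

Lemma prod_rising_shift x n :
  x * prod_f_R0 (fun k => x + 1 + INR k) n = prod_f_R0 (fun k => x + INR k) n * (x + INR n + 1).
Proof.
  induction n as [| n IHn]; cbn [prod_f_R0].
  - cbn [INR]. ring.
  - rewrite <- Rmult_assoc, IHn, S_INR. ring.
Qed.

Lemma rgamma_seq_shift x m : 0 < x ->
  rgamma_seq x m = x * (rgamma_seq (x + 1) m * (INR (S m) / (INR (S m) + (x + 1)))).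
Proof.
  intros Hx. pose proof (lt_0_INR (S m) ltac:(lia)) as Hn.
  assert (Hprod : prod_f_R0 (fun k => x + INR k) (S m)
                  = x * prod_f_R0 (fun k => x + 1 + INR k) (S m) / (x + INR (S m) + 1))
    by (rewrite prod_rising_shift; field; lra).
  unfold rgamma_seq. rewrite Hprod, Rpower_plus, Rpower_1 by exact Hn.
  pose proof (INR_fact_lt_0 (S m)). unfold Rpower. pose proof (exp_pos (x * ln (INR (S m)))).
  field. repeat split; lra.
Qed.

Lemma rgamma_succ x : 0 < x -> rgamma x = x * rgamma (x + 1).
Proof.
  intros Hx.
  apply UL_sequence with (rgamma_seq x); [now apply rgamma_seq_cv |].
  apply Un_cv_ext with (fun m => x * (rgamma_seq (x + 1) m * (INR (S m) / (INR (S m) + (x + 1))))).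
  - intros m. symmetry. now apply rgamma_seq_shift.
  - rewrite <- (Rmult_1_r (rgamma (x + 1))).
    apply (CV_mult (fun _ => x)); [apply Un_cv_const |].
    apply CV_mult; [apply rgamma_seq_cv; lra | apply Un_cv_succ_div_add; lra].
Qed.

Lemma T_eq a h : T a h = rgamma (- a) ^ 2 * (rgamma (h + a + 1) / rgamma (h - a - 1)).
Proof. unfold T, Gamma, Rdiv. rewrite Rinv_inv. ring. Qed.

Lemma T_nonneg a h : 0 < h - a - 1 -> 0 < h + a + 1 -> 0 <= T a h.
Proof.
  intros H1 H2. rewrite T_eq.
  apply Rmult_le_pos; [apply pow2_ge_0 |].
  left. apply Rdiv_lt_0_compat; now apply rgamma_pos.
Qed.

Lemma T_shift a h : 0 < h - a - 1 -> 0 < h + a + 1 ->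
  (h + a + 1) * T a (h + 1) = (h - a - 1) * T a h.
Proof.
  intros H1 H2. rewrite !T_eq.
  rewrite (rgamma_succ (h - a - 1)), (rgamma_succ (h + a + 1)) by assumption.
  replace (h + 1 + a + 1) with (h + a + 1 + 1) by ring.
  replace (h + 1 - a - 1) with (h - a - 1 + 1) by ring.
  pose proof (rgamma_pos (h - a - 1 + 1) ltac:(lra)).
  field. lra.
Qed.

Definition A a b h := - ((a + h) * (b + h)) / (a + b + 1) * T a h * T b h.

Section AShift.
Variables a b h : R.
Hypothesis hab : -1 < a + b.
Hypothesis ha : a + 1 < h.
Hypothesis hb : b + 1 < h.

Lemma A_succ :
  A a b (h + 1) = (h - a - 1) * (h - b - 1) / ((h + a) * (h + b)) * A a b h.
Proof.
  unfold A.
  replace (- ((a + (h + 1)) * (b + (h + 1))) / (a + b + 1) * T a (h + 1) * T b (h + 1))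
    with (- / (a + b + 1) * ((h + a + 1) * T a (h + 1)) * ((h + b + 1) * T b (h + 1)))
    by (field; lra).
  rewrite T_shift, T_shift by lra.
  field. repeat split; lra.
Qed.

Lemma A_telescope : A a b h - A a b (h + 1) = (1 - 2 * h) * T a h * T b h.
Proof.
  rewrite A_succ. unfold A. field. repeat split; lra.
Qed.

Lemma A_nonpos : A a b h <= 0.
Proof.
  pose proof (T_nonneg a h ltac:(lra) ltac:(lra)). pose proof (T_nonneg b h ltac:(lra) ltac:(lra)).
  unfold A. replace (- ((a + h) * (b + h)) / (a + b + 1) * T a h * T b h)
    with (- ((h + a) * (h + b) * T a h * T b h / (a + b + 1))) by (field; lra).
  enough (0 <= (h + a) * (h + b) * T a h * T b h / (a + b + 1)) by lra.
  apply Rmult_le_pos; [| left; apply Rinv_0_lt_compat; lra].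
  apply Rmult_le_pos; [| lra]. apply Rmult_le_pos; [| lra]. apply Rmult_le_pos; lra.
Qed.

(* AM-GM [(h + a)(h + b) <= v^2] with [v = h + (a + b)/2], and [2h - 1 = 2v - s] with [s = a + b + 1]. *)
Lemma succ_ratio_gap K : 0 < K <= h + (a + b) / 2 ->
  (a + b + 1) * (2 * K - (a + b + 1)) / K / (h + (a + b) / 2)
    <= 1 - (h - a - 1) * (h - b - 1) / ((h + a) * (h + b)).
Proof.
  intros [HK HKv]. set (s := a + b + 1). set (v := h + (a + b) / 2) in *.
  assert (Hprod : 0 < (h + a) * (h + b)) by (apply Rmult_lt_0_compat; lra).
  assert (Hamgm : (h + a) * (h + b) <= v * v) by (unfold v; pose proof (pow2_ge_0 (a - b)); nra).
  replace (1 - (h - a - 1) * (h - b - 1) / ((h + a) * (h + b)))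
    with (s * (2 * v - s) / ((h + a) * (h + b))) by (unfold s, v; field; lra).
  assert (Hs : 0 < s) by (unfold s; lra).
  assert (Hw : 0 < 2 * v - s) by (unfold s, v; lra).
  apply Rle_trans with (s * (2 * v - s) / (v * v)).
  - replace (s * (2 * K - s) / K / v) with (s * (2 * K - s) / (K * v)) by (field; lra).
    replace (s * (2 * v - s) / (v * v)) with (s * (2 - s / v) / v) by (field; lra).
    replace (s * (2 * K - s) / (K * v)) with (s * (2 - s / K) / v) by (field; lra).
    unfold Rdiv. apply Rmult_le_compat_r; [left; apply Rinv_0_lt_compat; lra |].
    apply Rmult_le_compat_l; [lra |].
    assert (/ v <= / K) by (apply Rinv_le_contravar; lra). nra.
  - unfold Rdiv. apply Rmult_le_compat_l; [nra |].
    apply Rinv_le_contravar; lra.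
Qed.

End AShift.

Lemma A_shift_cv_0 a b h0 : -1 < a + b -> a + 1 < h0 -> b + 1 < h0 ->
  Un_cv (fun n => A a b (h0 + INR n)) 0.
Proof.
  intros hab ha hb.
  set (K := h0 + (a + b) / 2).
  set (c := (a + b + 1) * (2 * K - (a + b + 1)) / K).
  assert (HK : 0 < K) by (unfold K; lra).
  assert (Hc : 0 < c).
  { unfold c. apply Rdiv_lt_0_compat; [apply Rmult_lt_0_compat |]; unfold K; lra. }
  rewrite <- Ropp_0.
  apply Un_cv_ext with (opp_seq (fun n => - A a b (h0 + INR n))).
  { intros n. unfold opp_seq. ring. }
  apply CV_opp, harmonic_decay_cv_0 with c K; [exact Hc | exact HK | |].
  - intros n. pose proof (pos_INR n).
    pose proof (A_nonpos a b (h0 + INR n) ltac:(lra) ltac:(lra) ltac:(lra)). lra.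
  - intros n. pose proof (pos_INR n).
    rewrite S_INR, <- Rplus_assoc, A_succ by lra.
    pose proof (succ_ratio_gap a b (h0 + INR n) ltac:(lra) ltac:(lra) ltac:(lra) K) as Hgap.
    replace (h0 + INR n + (a + b) / 2) with (INR n + K) in Hgap by (unfold K; ring).
    pose proof (A_nonpos a b (h0 + INR n) ltac:(lra) ltac:(lra) ltac:(lra)).
    fold c in Hgap. specialize (Hgap ltac:(unfold K; lra)).
    nra.
Qed.

Theorem mainTheorem1 (a b h0 : R)
  (hab : a + b > -1) (ha : h0 > a + 1) (hb : h0 > b + 1) :
  infinite_sum
    (fun l : nat => let h := h0 + INR l in (1 - 2 * h) * T a h * T b h)
    (- ((a + h0) * (b + h0)) / (a + b + 1) * T a h0 * T b h0).
Proof.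
  replace (- ((a + h0) * (b + h0)) / (a + b + 1) * T a h0 * T b h0) with (A a b (h0 + INR 0))
    by (simpl; rewrite Rplus_0_r; reflexivity).
  apply (infinite_sum_telescope _ (fun n => A a b (h0 + INR n))); [| apply A_shift_cv_0; lra].
  intros n. pose proof (pos_INR n). cbv zeta.
  rewrite S_INR, <- Rplus_assoc, A_telescope by lra. reflexivity.
Qed.
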